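(* For every $n\ge 3$ and every field $\mathrm{k}$ of characteristic zero, the pre-WDVV ring $R_n$ is a Koszul algebra.
   Context: A stable $2$-partition of $\{1,\dots,n\}$ is an unordered partition $\sigma=S_1/S_2$ of $\{1,\dots,n\}$ into two blocks with $|S_1|,|S_2|\ge 2$; $P_n$ denotes the set of these. For $\sigma=S_1/S_2$, $\tau=T_1/T_2$ in $P_n$, $a(\sigma,\tau)$ is the number of nonempty pairwise distinct sets among $S_i\cap T_j$, $1\le i,j\le 2$. The pre-WDVV ring is the standard graded algebra $R_n=\mathrm{k}[x_\sigma:\sigma\in P_n]/J_n$, where $J_n$ is the ideal generated by all products $x_\sigma x_\tau$ with $a(\sigma,\tau)=4$. *)

From HB Require Import structures.
From mathcomp Require Import all_boot all_order all_algebra.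
From mathcomp Require Import mpoly.
Set Implicit Arguments. Unset Strict Implicit. Unset Printing Implicit Defensive.
Import GRing.Theory.
Local Open Scope ring_scope.

(* A stable 2-partition of {1..n} (modelled as 'I_n) is an unordered pair of
   blocks {S, complement S}, both of size >= 2: a set of two sets. *)
Definition is_stable2 (n : nat) (s : {set {set 'I_n}}) : bool :=
  [exists S : {set 'I_n},
     [&& s == [set S; ~: S], (1 < #|S|)%N & (1 < #|~: S|)%N ]].

Definition P (n : nat) := {s : {set {set 'I_n}} | is_stable2 s}.

Definition a_int (n : nat) (s t : P n) : nat :=
  #| [set S :&: T | S in val s, T in val t] :\ set0 |.

Definition nvars (n : nat) : nat := #|{: P n}|.

Definition xvar (k : fieldType) (n : nat) (s : P n) : {mpoly k[nvars n]} :=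
  'X_(enum_rank s).

Definition inJ (k : fieldType) (n : nat) (p : {mpoly k[nvars n]}) : Prop :=
  exists c : P n -> P n -> {mpoly k[nvars n]},
    p = \sum_(s : P n) \sum_(t : P n | a_int s t == 4%N)
          c s t * (xvar k s * xvar k t).

Definition inJrow (k : fieldType) (n m : nat)
  (v : 'rV[{mpoly k[nvars n]}]_m) : Prop := forall j, inJ (v 0 j).

(* R_n = S/J_n with S = k[x_sigma] (standard graded) is Koszul:
   the residue field k = R_n / (x_sigma) has a linear graded free resolution
     ... -> R_n(-2)^{b 2} --M 1--> R_n(-1)^{b 1} --M 0--> R_n^{b 0} = R_n -> k -> 0,
   i.e. all matrices have entries that are linear forms (homogeneous of degree 1,
   possibly zero).  Maps act on row vectors (v |-> v *m M i); exactness is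
   stated over S modulo J_n. *)
Definition preWDVV_Koszul (k : fieldType) (n : nat) : Prop :=
  exists (b : nat -> nat)
         (M : forall i : nat, 'M[{mpoly k[nvars n]}]_(b i.+1, b i)),
    [/\ b 0%N = 1%N,
        (forall i r c, M i r c \is 1.-homog),
        (* exactness at R_n: kernel of augmentation R_n -> k is im (M 0) *)
        (forall v : 'rV[{mpoly k[nvars n]}]_(b 0%N),
            (forall j, (v 0 j) @_ 0%MM = 0) <->
            exists w : 'rV_(b 1%N), inJrow (v - w *m M 0%N)) &
        (* exactness at R_n(-i-1)^{b (i+1)} *)
        (forall i (v : 'rV[{mpoly k[nvars n]}]_(b i.+1)),
            inJrow (v *m M i) <->
            exists w : 'rV_(b i.+2), inJrow (v - w *m M i.+1))].

From mathcomp Require Import all_boot all_order all_algebra.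
From mathcomp Require Import mpoly.
From mathcomp Require Import zify ring.
Set Implicit Arguments. Unset Strict Implicit. Unset Printing Implicit Defensive.
Import GRing.Theory.
Local Open Scope ring_scope.

(* R_n = S/I, where I is generated by the quadratic monomials x_s x_t with
   a(s,t) = 4, and every quadratic monomial algebra is Koszul (Froberg); we build
   the linear resolution of k over R explicitly.  Order the variables and let
   F(X) resolve R/(x_c : c in X).  If b is the largest element of X, then
   ((x_c : c in X, c <> b) + I) : x_b is generated by the variables of X below b
   and the neighbours of b in the graph of I, so F(X) is the mapping cone of a
   linear lift of x_b.  Unwinding the recursion, F_i(X) has a basis indexed by
   admissible sequences and the differential has linear entries; exactness
   follows by induction on the homological degree and on |X|, and the case where
   X contains every variable resolves k. *)

Section TupleSums.
Variables (T : finType) (V : nmodType).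

Lemma sum_tupleS n (F : seq T -> V) :
  \sum_(t : n.+1.-tuple T) F t = \sum_(x : T) \sum_(t : n.-tuple T) F (x :: t).
Proof.
rewrite pair_big /= (reindex (fun p : T * n.-tuple T => [tuple of p.1 :: p.2])) //=.
exists (fun t : n.+1.-tuple T => (thead t, [tuple of behead t])).
  by move=> [x t] _; congr pair => //; apply: val_inj.
by move=> t _; case/tupleP: t => x t /=; apply: val_inj.
Qed.

Lemma sum_tuple_eq n (w : seq T) (F : seq T -> V) : size w = n ->
  \sum_(t : n.-tuple T) (if tval t == w then F t else 0) = F w.
Proof.
move=> /eqP w_n; rewrite (bigD1 (Tuple w_n)) //= eqxx big1 ?addr0 // => t tw'.
by case: eqP => // tw; move: tw'; rewrite -val_eqE /= tw eqxx.
Qed.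

Lemma sum_tuple0 (F : seq T -> V) : \sum_(t : 0.-tuple T) F t = F [::].
Proof. by rewrite -(@sum_tuple_eq 0 [::] F) //; apply: eq_bigr => t _; rewrite tuple0. Qed.

End TupleSums.

Section MonomialResolution.
Variables (k : fieldType) (N : nat) (E : rel 'I_N).
Local Notation R := {mpoly k[N]}.
Implicit Types (X Y : {set 'I_N}) (b c d x : 'I_N) (t u w : seq 'I_N).
Implicit Types (p q : R) (m : 'X_{1..N}).

Definition inI p : Prop := exists c : 'I_N -> 'I_N -> R,
  p = \sum_i \sum_(j | E i j) c i j * ('X_i * 'X_j).

Lemma inI0 : inI 0.
Proof.
exists (fun _ _ => 0); rewrite big1 // => i _.
by rewrite big1 // => j _; rewrite mul0r.
Qed.

Lemma inID p q : inI p -> inI q -> inI (p + q).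
Proof.
move=> [c1 ->] [c2 ->]; exists (fun i j => c1 i j + c2 i j).
rewrite -big_split; apply: eq_bigr => i _; rewrite -big_split.
by apply: eq_bigr => j _; rewrite mulrDl.
Qed.

Lemma inIMl q p : inI p -> inI (q * p).
Proof.
move=> [c ->]; exists (fun i j => q * c i j).
rewrite mulr_sumr; apply: eq_bigr => i _; rewrite mulr_sumr.
by apply: eq_bigr => j _; rewrite mulrA.
Qed.

Lemma inIN p : inI p -> inI (- p).
Proof. by move=> Ip; rewrite -mulN1r; apply: inIMl. Qed.

Lemma inIB p q : inI p -> inI q -> inI (p - q).
Proof. by move=> Ip Iq; apply: inID => //; apply: inIN. Qed.

Lemma inI_sum (I : Type) (r : seq I) (P : pred I) (F : I -> R) :
  (forall i, P i -> inI (F i)) -> inI (\sum_(i <- r | P i) F i).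
Proof. by move=> IF; apply: (big_ind inI) => //; [apply: inI0 | apply: inID]. Qed.

Lemma inI_XX a b : E a b -> inI ('X_a * 'X_b).
Proof.
move=> Eab; exists (fun i j => ((i == a) && (j == b))%:R).
rewrite (bigD1 a) //= (bigD1 b) //= !eqxx mul1r big1 ?addr0; last first.
  by move=> j /andP [_ /negbTE ->]; rewrite mul0r.
by rewrite big1 ?addr0 // => i /negbTE ->; rewrite big1 // => j _; rewrite mul0r.
Qed.

Definition inIX X p : Prop :=
  exists q : 'I_N -> R, inI (p - \sum_(c in X) q c * 'X_c).

Definition mono_inIX X m : bool :=
  [exists c in X, (0 < m c)%N] ||
  [exists a, exists b, E a b && (U_(a) + U_(b) <= m)%MM].

Lemma mcoeffMX_eq0 p e m : ~~ (e <= m)%MM -> (p * 'X_[e])@_m = 0.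
Proof.
move=> em; apply/eqP; rewrite mcoeff_eq0; apply/negP => m_supp.
move: (perm_mem (msuppMX p e) m); rewrite m_supp => /esym /mapP [m' _ Em].
by rewrite Em lem_addr in em.
Qed.

Lemma inIX_coef X p : inIX X p -> forall m, ~~ mono_inIX X m -> p@_m = 0.
Proof.
move=> [q [c pq]] m; rewrite /mono_inIX negb_or => /andP [/existsPn mX /existsPn mI].
have -> : p = (p - \sum_(c in X) q c * 'X_c) + \sum_(c in X) q c * 'X_c.
  by rewrite subrK.
rewrite pq mcoeffD !raddf_sum /=.
rewrite big1 ?add0r => [|i _]; last first.
  rewrite raddf_sum /= big1 // => j Eij; rewrite -mpolyXD; apply: mcoeffMX_eq0.
  by move: (mI i) => /existsPn /(_ j); rewrite Eij.
rewrite big1 // => c0 Xc0; apply: mcoeffMX_eq0; rewrite lep1mP negbK -leqn0 leqNgt.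
by move: (mX c0); rewrite Xc0.
Qed.

Lemma inIX0 X : inIX X 0.
Proof.
exists (fun _ => 0); rewrite big1 ?subr0; first exact: inI0.
by move=> c _; rewrite mul0r.
Qed.

Lemma inIXD X p q : inIX X p -> inIX X q -> inIX X (p + q).
Proof.
move=> [q1 Ip] [q2 Iq]; exists (fun c => q1 c + q2 c).
rewrite (eq_bigr (fun c => q1 c * 'X_c + q2 c * 'X_c)) => [|c _]; last exact: mulrDl.
by rewrite big_split /= opprD addrACA; apply: inID.
Qed.

Lemma inI_inIX X p : inI p -> inIX X p.
Proof. by move=> Ip; exists (fun _ => 0); rewrite big1 ?subr0 // => c _; rewrite mul0r. Qed.

Lemma inIX_mulX X p c : c \in X -> inIX X (p * 'X_c).
Proof.
move=> Xc; exists (fun d => if d == c then p else 0).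
rewrite (bigD1 c) //= eqxx big1 ?addr0 ?subrr; first exact: inI0.
by move=> d /andP [_ /negbTE ->]; rewrite mul0r.
Qed.

Lemma coef_inIX X p : (forall m, ~~ mono_inIX X m -> p@_m = 0) -> inIX X p.
Proof.
move=> p0; rewrite (mpolyE p) big_seq; apply: (big_ind (inIX X)).
- exact: inIX0.
- exact: inIXD.
move=> m m_supp; have : mono_inIX X m.
  by apply/negPn/negP => /p0 /eqP; rewrite mcoeff_eq0 m_supp.
case/orP => [/existsP [c /andP [Xc mc]] | /existsP [a /existsP [b /andP [Eab le_ab]]]].
- have le_c : (U_(c) <= m)%MM by rewrite lep1mP -lt0n.
  rewrite -(submK le_c) mpolyXD scalerAl; exact: inIX_mulX.
- rewrite -(submK le_ab) !mpolyXD mulrA -mulrA scalerAl.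
  by apply/inI_inIX/inIMl/inI_XX.
Qed.

Definition nbhd c : {set 'I_N} := [set d | E c d || E d c].

Lemma inI_nbhd c d : d \in nbhd c -> inI ('X_c * 'X_d).
Proof. by rewrite inE => /orP [] Ecd; [apply: inI_XX | rewrite mulrC; apply: inI_XX]. Qed.

Lemma inIX_colon X b p :
  b \notin X -> inIX X ('X_b * p) -> inIX (X :|: nbhd b) p.
Proof.
move=> Xb Ibp; apply: coef_inIX => m m_out.
rewrite -(mcoeffMX p (U_(b))) -mulrC; apply: (inIX_coef Ibp).
apply: contra m_out; case/orP.
- case/existsP => c /andP [Xc]; rewrite mnmDE mnm1E.
  have -> : (b == c) = false by apply: contraNF Xb => /eqP ->.
  by rewrite add0n => mc; apply/orP; left; apply/existsP; exists c; rewrite inE Xc mc.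
- case/existsP => a /existsP [a' /andP [Eaa /mnm_lepP le_aa]].
  have le_a := le_aa a; have le_a' := le_aa a'; rewrite !mnmDE !mnm1E !eqxx in le_a le_a'.
  case: (eqVneq a b) => [eab | nab].
    subst a; apply/orP; left; apply/existsP; exists a'; rewrite !inE Eaa orbT /=.
    move: le_a'; case: (eqVneq b a') => [<-|_]; rewrite ?eqxx /=; lia.
  case: (eqVneq a' b) => [ea'b | na'b].
    subst a'; apply/orP; left; apply/existsP; exists a; rewrite !inE Eaa orbT /=.
    by move: le_a; rewrite eq_sym (negbTE nab) /=; lia.
  apply/orP; right; apply/existsP; exists a; apply/existsP; exists a'.
  rewrite Eaa /=; apply/mnm_lepP => i; have := le_aa i; rewrite !mnmDE !mnm1E.
  case: (eqVneq b i) => [<-|_]; last by rewrite add0n.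
  by rewrite (negbTE nab) (negbTE na'b).
Qed.

Definition below X c : {set 'I_N} := [set x in X | (x < c)%N].
Definition colon X c : {set 'I_N} := below X c :|: nbhd c.

(* The resolution F(X) of R / ((x_c : c in X) + I): a basis of F_i(X) is given
   by the admissible sequences of length i, and dcoef X t u is the coefficient
   of e_u in d(e_t).  It is the iterated mapping cone of the multiplications
   x_c : F(colon X c)[-1] -> F(below X c), the lift of x_c being e_w |-> x_c e_w
   (and 0 when w is not admissible for below X c). *)
Fixpoint admissible X (w : seq 'I_N) : bool :=
  if w is c :: w' then (c \in X) && admissible (colon X c) w' else true.

Fixpoint dcoef X (t u : seq 'I_N) : R :=
  if t is c :: w then
    (if (u == w) && admissible (below X c) w then 'X_c else 0) -
    (if u is c' :: u' then (if c' == c then dcoef (colon X c) w u' else 0) else 0)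
  else 0.

Lemma below_sub X c : below X c \subset X.
Proof. by apply/subsetP => x; rewrite inE => /andP []. Qed.

Lemma belowS X Y c : X \subset Y -> below X c \subset below Y c.
Proof. by move=> /subsetP XY; apply/subsetP => x; rewrite !inE => /andP [/XY -> ->]. Qed.

Lemma colonS X Y c : X \subset Y -> colon X c \subset colon Y c.
Proof. by move=> XY; apply/setSU/belowS. Qed.

Lemma below_below X c d : (d < c)%N -> below (below X c) d = below X d.
Proof.
move=> dc; apply/setP => x; rewrite !inE.
by case xd: (x < d)%N; rewrite ?andbF // (ltn_trans xd dc) !andbT.
Qed.

Lemma admissibleS w X Y : X \subset Y -> admissible X w -> admissible Y w.
Proof.
elim: w X Y => [//|c w IH] X Y XY /= /andP [Xc Xw].
by rewrite (subsetP XY _ Xc) (IH _ _ (colonS c XY)).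
Qed.

Lemma admissibleI w X Y :
  admissible X w -> admissible Y w -> admissible (X :&: Y) w.
Proof.
elim: w X Y => [//|c w IH] X Y /= /andP [Xc Xw] /andP [Yc Yw].
rewrite inE Xc Yc; apply: admissibleS (IH _ _ Xw Yw).
apply/subsetP => x; rewrite !inE.
by case: (x \in X); case: (x \in Y); case: (x < c)%N; case: (E c x); case: (E x c).
Qed.

Lemma dcoef_admissible t X u : admissible X t -> dcoef X t u != 0 -> admissible X u.
Proof.
elim: t X u => [|c w IH] X u /=; first by rewrite eqxx.
move=> /andP [Xc Xw].
have [/andP [/eqP -> Bw] _|_] := boolP ((u == w) && admissible (below X c) w).
  exact: admissibleS (below_sub X c) Bw.
case: u => [|c' u'] /=; first by rewrite subrr eqxx.
case: (eqVneq c' c) => [->|_]; last by rewrite subrr eqxx.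
by rewrite sub0r oppr_eq0 Xc => /(IH _ _ Xw).
Qed.

Lemma dcoef_cons_below X Y d w u :
  below X d = below Y d -> dcoef X (d :: w) u = dcoef Y (d :: w) u.
Proof. by move=> XY; rewrite /= /colon XY. Qed.

Lemma dcoef_restrict w X Y u : X \subset Y -> admissible X w ->
  dcoef X w u = (if admissible X u then dcoef Y w u else 0).
Proof.
elim: w X Y u => [|d w IH] X Y u XY /=; first by case: (admissible X u).
move/andP => [Xd Xw].
have diag : (u == w) && admissible (below X d) w =
    admissible X u && ((u == w) && admissible (below Y d) w).
  case: (eqVneq u w) => [->|]; last by rewrite andbF.
  apply/idP/idP => [Bw|/andP [Xw' Bw]].
    by rewrite (admissibleS (below_sub X d) Bw) (admissibleS (belowS d XY) Bw).
  apply: admissibleS (admissibleI Xw' Bw).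
  by apply/subsetP => x; rewrite !inE => /andP [-> /andP [_ ->]].
have tail : (if u is c' :: u' then (if c' == d then dcoef (colon X d) w u' else 0) else 0) =
    (if admissible X u then
       (if u is c' :: u' then (if c' == d then dcoef (colon Y d) w u' else 0) else 0)
     else 0).
  case: u {diag} => [|c' u'] //=.
  case: (eqVneq c' d) => [->|_]; last by case: ifP.
  by rewrite Xd /= (IH _ (colon Y d)) //; apply: colonS.
by rewrite diag tail; case: (admissible X u); rewrite /= ?subr0.
Qed.

Lemma inI_mulX_dcoef c w X Y u :
  X \subset Y -> Y \subset X :|: nbhd c ->
  admissible Y w -> ~~ admissible X w -> admissible X u -> inI ('X_c * dcoef Y w u).
Proof.
elim: w X Y u => [|d w IH] X Y u XY YX //= /andP [Yd Yw] Xw Xu.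
rewrite mulrBr; apply: inIB.
- case: ifP => [/andP [/eqP Euw Bw] | _]; last by rewrite mulr0; apply: inI0.
  have [Xd|Xd] := boolP (d \in X).
    exfalso; move: Xw; rewrite Xd /=; apply/negP/negPn; rewrite Euw in Xu.
    apply: admissibleS (admissibleI Xu Bw).
    by apply/subsetP => x; rewrite !inE => /andP [-> /andP [_ ->]].
  by apply: inI_nbhd; move: (subsetP YX _ Yd); rewrite inE (negbTE Xd).
- case: u Xu => [|c' u'] /=; first by rewrite mulr0 => _; apply: inI0.
  move/andP => [Xc' Xu']; case: ifP => [/eqP Ec|_]; last by rewrite mulr0; apply: inI0.
  subst c'; rewrite Xc' /= in Xw.
  apply: (IH (colon X d) (colon Y d)) => //; first exact: colonS.
  apply/subsetP => x; rewrite !inE => /orP [/andP [Yx xd]|->]; last by rewrite !orbT.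
  by move: (subsetP YX _ Yx); rewrite !inE => /orP [->|->]; rewrite ?xd ?orbT.
Qed.

Lemma sum_dcoef_cons n X c w (G : seq 'I_N -> R) : size w = n.+1 ->
  \sum_(s : n.+1.-tuple 'I_N) dcoef X (c :: w) s * G s =
  (if admissible (below X c) w then 'X_c * G w else 0) -
  \sum_(s : n.-tuple 'I_N) dcoef (colon X c) w s * G (c :: s).
Proof.
move=> w_n; rewrite /= (eq_bigr (fun s : n.+1.-tuple 'I_N =>
   (if tval s == w then (if admissible (below X c) w then 'X_c * G s else 0) else 0) -
   (if tval s is c' :: u' then (if c' == c then dcoef (colon X c) w u' else 0) else 0) * G s));
  last first.
  move=> s _; rewrite mulrBl; congr (_ - _).
  by case: (tval s == w); case: (admissible _ _); rewrite /= ?mul0r.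
rewrite sumrB (sum_tuple_eq (fun s => if admissible (below X c) w then 'X_c * G s else 0)) //.
congr (_ - _); rewrite (@sum_tupleS _ _ n (fun s =>
  (if s is c' :: u' then (if c' == c then dcoef (colon X c) w u' else 0) else 0) * G s)).
rewrite (bigD1 c) //= [X in _ + X]big1 ?addr0.
  by apply: eq_bigr => t _; rewrite eqxx.
by move=> x /negbTE xc; apply: big1 => t _; rewrite xc mul0r.
Qed.

Lemma sum_dcoef_colon n X c w u : size u = n ->
  \sum_(s : n.-tuple 'I_N) dcoef (colon X c) w s * dcoef X (c :: s) u =
  (if admissible (below X c) u then dcoef (colon X c) w u * 'X_c else 0) -
  (if u is c' :: u' then (if c' == c then
     \sum_(s : n.-tuple 'I_N) dcoef (colon X c) w s * dcoef (colon X c) s u' else 0)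
   else 0).
Proof.
move=> u_n /=; rewrite (eq_bigr (fun s : n.-tuple 'I_N =>
   (if tval s == u then
      dcoef (colon X c) w s * (if admissible (below X c) s then 'X_c else 0) else 0) -
   dcoef (colon X c) w s *
     (if u is c' :: u' then (if c' == c then dcoef (colon X c) s u' else 0) else 0)));
  last by move=> s _; rewrite mulrBr eq_sym; case: eqP => _ //=; rewrite mulr0.
rewrite sumrB (sum_tuple_eq
  (fun s => dcoef (colon X c) w s * (if admissible (below X c) s then 'X_c else 0))) //.
congr (_ - _); first by case: (admissible _ _); rewrite ?mulr0.
case: u {u_n} => [|c' u']; first by rewrite big1 // => s _; rewrite mulr0.
by case: (c' == c); last by rewrite big1 // => s _; rewrite mulr0.
Qed.

(* The lift e_w |-> x_c e_w is a chain map modulo I: this is where the colon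
   computation enters, through inI_mulX_dcoef. *)
Lemma dcoef_square_cons n X c w u : size w = n.+1 -> size u = n ->
  admissible (colon X c) w ->
  inI (if u is c' :: u' then (if c' == c then
     \sum_(s : n.-tuple 'I_N) dcoef (colon X c) w s * dcoef (colon X c) s u' else 0)
   else 0) ->
  inI (\sum_(s : n.+1.-tuple 'I_N) dcoef X (c :: w) s * dcoef X s u).
Proof.
move=> w_n u_n Cw Isq.
rewrite (sum_dcoef_cons X c (fun s => dcoef X s u) w_n) (sum_dcoef_colon X c w u_n).
rewrite opprB addrCA.
apply: inID => //; have BC : below X c \subset colon X c by apply: subsetUl.
have [Bw|Bw] := boolP (admissible (below X c) w).
  have -> : dcoef X w u = dcoef (below X c) w u.
    case: w w_n Cw Bw {Isq} => [//|d w'] _ _ /= /andP [Bd _].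
    by apply: dcoef_cons_below; rewrite below_below //; move: Bd; rewrite inE => /andP [].
  rewrite (dcoef_restrict _ BC Bw); case: (admissible _ u).
    by rewrite [X in _ - X]mulrC subrr; exact: inI0.
  by rewrite mulr0 subrr; exact: inI0.
rewrite sub0r; have [Bu|_] := boolP (admissible (below X c) u); last by rewrite oppr0; apply: inI0.
by apply: inIN; rewrite mulrC; apply: (inI_mulX_dcoef (X := below X c)).
Qed.

Lemma dcoef_square n X t u : size t = n.+2 -> size u = n -> admissible X t ->
  inI (\sum_(s : n.+1.-tuple 'I_N) dcoef X t s * dcoef X s u).
Proof.
elim: n X t u => [|n IH] X [|c w] u //= [w_n] u_n /andP [Xc Cw];
  apply: dcoef_square_cons => //.
  by case: u u_n => [|? ?] //= _; exact: inI0.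
case: u u_n => [//|c' u'] /= [u_n]; case: (c' == c); last exact: inI0.
exact: IH.
Qed.

(* Chains of F_n(X) are coefficient functions on sequences of length n. *)
Definition supported X n (f : seq 'I_N -> R) : Prop :=
  forall t, size t = n -> ~~ admissible X t -> f t = 0.

Definition dmap X n (f : seq 'I_N -> R) u : R :=
  \sum_(t : n.+1.-tuple 'I_N) f t * dcoef X t u.

Definition exact_at X n : Prop := forall f, supported X n.+1 f ->
  (forall u, size u = n -> inI (dmap X n f u)) ->
  exists g, supported X n.+2 g /\ forall t, size t = n.+1 -> inI (f t - dmap X n.+1 g t).

Lemma dmap_supported X n f u :
  supported X n.+1 f -> ~~ admissible X u -> dmap X n f u = 0.
Proof.
move=> f_supp Xu; apply: big1 => t _.
have [Xt|Xt] := boolP (admissible X t); last by rewrite (f_supp t (size_tuple t) Xt) mul0r.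
have [->|/(dcoef_admissible Xt) Xu'] := eqVneq (dcoef X t u) 0; first by rewrite mulr0.
by rewrite Xu' in Xu.
Qed.

Lemma dmap_inI X n f u : (forall t, size t = n.+1 -> inI (f t)) -> inI (dmap X n f u).
Proof. by move=> If; apply: inI_sum => t _; rewrite mulrC; apply/inIMl/If/size_tuple. Qed.

Lemma eq_dmap X n f g u :
  (forall t, size t = n.+1 -> f t = g t) -> dmap X n f u = dmap X n g u.
Proof. by move=> fg; apply: eq_bigr => t _; rewrite fg // size_tuple. Qed.

Lemma dmap_restrict X Y n f u :
  (forall t, size t = n.+1 -> admissible Y t -> dcoef X t u = dcoef Y t u) ->
  supported Y n.+1 f -> dmap X n f u = dmap Y n f u.
Proof.
move=> XY f_supp; apply: eq_bigr => t _.
have [Yt|Yt] := boolP (admissible Y t); first by rewrite XY // size_tuple.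
by rewrite (f_supp t (size_tuple t) Yt) !mul0r.
Qed.

Lemma dmap_dmap X n g u :
  supported X n.+2 g -> size u = n -> inI (dmap X n (dmap X n.+1 g) u).
Proof.
move=> g_supp u_n; rewrite /dmap.
rewrite (eq_bigr (fun s : n.+1.-tuple 'I_N =>
    \sum_(t : n.+2.-tuple 'I_N) g t * (dcoef X t s * dcoef X s u))); last first.
  by move=> s _; rewrite mulr_suml; apply: eq_bigr => t _; rewrite mulrA.
rewrite exchange_big /=; apply: inI_sum => t _; rewrite -mulr_sumr.
have [Xt|Xt] := boolP (admissible X t); last first.
  by rewrite (g_supp t (size_tuple t) Xt) mul0r; apply: inI0.
by apply/inIMl/dcoef_square; rewrite ?size_tuple.
Qed.

Lemma dcoef_cons_same X b w s : dcoef X (b :: w) (b :: s) = - dcoef (colon X b) w s.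
Proof.
rewrite /= eqxx; case: eqP => [<-|_] /=; last by rewrite sub0r.
by rewrite inE ltnn andbF /= sub0r.
Qed.

Lemma dcoef_cons_lt X b x w s : (x < b)%N -> dcoef X (x :: w) (b :: s) = 0.
Proof.
move=> xb /=; rewrite (_ : (b == x) = false); last by apply/negbTE; rewrite neq_ltn xb orbT.
case: eqP => [<-|_] /=; last by rewrite subrr.
by rewrite inE ltnNge (ltnW xb) andbF /= subrr.
Qed.

Section Cone.
Variables (A : {set 'I_N}) (b : 'I_N).
Hypotheses (Ab : b \in A) (b_max : forall x, x \in A -> (x <= b)%N).

Lemma below_setD1_max x : (x <= b)%N -> below (A :\ b) x = below A x.
Proof.
move=> xb; apply/setP => y; rewrite !inE.
by case yx: (y < x)%N; rewrite ?andbF // !andbT neq_ltn (leq_trans yx xb).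
Qed.

Lemma dcoef_setD1_max t u : admissible (A :\ b) t -> dcoef A t u = dcoef (A :\ b) t u.
Proof.
case: t => [//|x w] /= /andP [Ax _]; apply: dcoef_cons_below.
by rewrite below_setD1_max //; apply: b_max; move: Ax; rewrite inE => /andP [].
Qed.

Lemma admissible_setD1_max t : admissible A t -> ~~ admissible (A :\ b) t ->
  exists2 w, t = b :: w & admissible (colon A b) w.
Proof.
case: t => [//|x w] /= /andP [Ax Cw].
have [xb _|xb] := eqVneq x b; first by exists w; rewrite -?xb.
rewrite !inE xb Ax /colon below_setD1_max -/(colon A x) ?Cw //; apply: b_max Ax.
Qed.

Lemma dmap_cons_max n f s : supported A n.+2 f ->
  dmap A n.+1 f (b :: s) = - dmap (colon A b) n (fun w => f (b :: w)) s.
Proof.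
move=> f_supp; rewrite /dmap (@sum_tupleS _ _ n.+1 (fun t => f t * dcoef A t (b :: s))).
rewrite (eq_bigr (fun x => \sum_(t : n.+1.-tuple 'I_N)
   (if x == b then - (f (b :: t) * dcoef (colon A b) t s) else 0))) => [|x _]; last first.
  apply: eq_bigr => t _; case: eqP => [->|xb]; first by rewrite dcoef_cons_same mulrN.
  have [Ax|Ax] := boolP (x \in A); last first.
    by rewrite (f_supp (x :: t)) ?mul0r //= ?size_tuple // (negbTE Ax).
  rewrite dcoef_cons_lt ?mulr0 // ltn_neqAle b_max // andbT.
  by apply/negP => /eqP /val_inj.
rewrite (bigD1 b) //= [X in _ + X]big1 ?addr0 => [|x /negbTE ->]; last by rewrite big1.
by rewrite -sumrN; apply: eq_bigr => t _; rewrite eqxx.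
Qed.

Definition boundary_max_part n : Prop := forall f, supported A n.+1 f ->
  (forall u, size u = n -> inI (dmap A n f u)) ->
  exists z, supported (colon A b) n.+1 z /\
    forall s, size s = n -> inI (f (b :: s) - dmap (colon A b) n z s).

(* F(A) is the mapping cone of F(colon A b)[-1] -> F(A :\ b): subtracting from a
   cycle f the boundary of b :: z kills its b-part, leaving a cycle of F(A :\ b). *)
Lemma exact_at_cone n : exact_at (A :\ b) n -> boundary_max_part n -> exact_at A n.
Proof.
move=> exactD1 bnd f f_supp f_cycle.
have [z [z_supp z_bnd]] := bnd f f_supp f_cycle.
pose h s := if s is x :: w then (if x == b then z w else 0) else 0.
have h_supp : supported A n.+2 h.
  by move=> [|x w] //= [w_n]; case: eqP => [->|] //; rewrite Ab /=; apply: z_supp.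
pose f' t := f t + dmap A n.+1 h t.
pose f'' t := if admissible (A :\ b) t then f' t else 0.
have f''_supp : supported (A :\ b) n.+1 f'' by move=> t _ /negbTE Dt; rewrite /f'' Dt.
have f''_f' t : size t = n.+1 -> inI (f'' t - f' t).
  move=> t_n; rewrite /f''; case: ifP => Dt; first by rewrite subrr; apply: inI0.
  rewrite sub0r; apply: inIN; have [At|At] := boolP (admissible A t); last first.
    by rewrite /f' (f_supp t t_n At) (dmap_supported h_supp At) addr0; apply: inI0.
  have [w tw _] := admissible_setD1_max At (negbT Dt); move: t_n; rewrite {}tw => -[w_n].
  rewrite /f' dmap_cons_max // (@eq_dmap _ n _ z) => [|u _]; last by rewrite /= eqxx.
  exact: z_bnd.
have f''_cycle u : size u = n -> inI (dmap (A :\ b) n f'' u).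
  move=> u_n; rewrite -(@dmap_restrict A) // => [|t _]; last exact: dcoef_setD1_max.
  have -> : dmap A n f'' u = dmap A n (fun t => f'' t - f' t) u + dmap A n f u +
      dmap A n (dmap A n.+1 h) u.
    by rewrite /dmap -!big_split /=; apply: eq_bigr => t _; rewrite /f' /dmap; ring.
  by apply: inID; [apply: inID; [apply: dmap_inI | apply: f_cycle] | apply: dmap_dmap].
have [g' [g'_supp g'_bnd]] := exactD1 f'' f''_supp f''_cycle.
exists (fun t => g' t - h t); split.
  move=> t t_n At; rewrite (h_supp t t_n At) subr0; apply: g'_supp => //.
  by apply: contra At; apply/admissibleS/subD1set.
move=> t t_n; rewrite (_ : dmap A n.+1 _ t = dmap (A :\ b) n.+1 g' t - dmap A n.+1 h t).
  suff -> : f t - (dmap (A :\ b) n.+1 g' t - dmap A n.+1 h t) =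
      (f'' t - dmap (A :\ b) n.+1 g' t) - (f'' t - f' t).
    by apply: inIB; [apply: g'_bnd | apply: f''_f'].
  by rewrite /f'; ring.
rewrite -(@dmap_restrict A) // => [|t0 _]; last exact: dcoef_setD1_max.
by rewrite /dmap -sumrB; apply: eq_bigr => t0 _; rewrite mulrBl.
Qed.

Lemma dmap0 X f : dmap X 0 f [::] = \sum_x f [:: x] * 'X_x.
Proof.
rewrite /dmap (@sum_tupleS _ _ 0 (fun t => f t * dcoef X t [::])).
apply: eq_bigr => x _; rewrite (@sum_tuple0 _ _ (fun t => f (x :: t) * dcoef X (x :: t) [::])).
by rewrite /= subr0.
Qed.

(* In degree 1 this is the colon computation inIX_colon. *)
Lemma boundary_max_part0 : boundary_max_part 0.
Proof.
move=> f f_supp f_cycle.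
have Ibf : inIX (below A b) ('X_b * f [:: b]).
  exists (fun x => - f [:: x]); move: (f_cycle [::] erefl); rewrite dmap0.
  rewrite (bigD1 b) //= [Y in _ - Y](eq_bigr (fun x => - (f [:: x] * 'X_x))) => [|x _];
    last by rewrite mulNr.
  rewrite sumrN opprK mulrC; congr (inI (_ + _)).
  rewrite big_mkcond [RHS]big_mkcond /=; apply: eq_bigr => x _.
  have [->|xb] := eqVneq x b; first by rewrite inE ltnn andbF.
  rewrite inE /=; have [Ax|Ax] := boolP (x \in A); last first.
    by rewrite (f_supp [:: x]) ?mul0r //= (negbTE Ax).
  by rewrite ltn_neqAle b_max // andbT; case: eqP => // /val_inj xb'; rewrite xb' eqxx in xb.
have b_below : b \notin below A b by rewrite inE ltnn andbF.
have [q Iq] := inIX_colon b_below Ibf.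
exists (fun s => if s is [:: x] then (if x \in colon A b then q x else 0) else 0); split.
  by move=> [|x [|y s]] //= _; rewrite andbT => /negbTE ->.
move=> [|//] _; rewrite dmap0; move: Iq; congr (inI (_ - _)).
by rewrite big_mkcond; apply: eq_bigr => x _; rewrite /colon; case: ifP; rewrite ?mul0r.
Qed.

Lemma boundary_max_partS n : exact_at (colon A b) n -> boundary_max_part n.+1.
Proof.
move=> exactC f f_supp f_cycle; apply: (exactC (fun w => f (b :: w))).
  by move=> t t_n Ct; apply: f_supp; rewrite /= ?t_n // Ab.
move=> u u_n; have := f_cycle (b :: u); rewrite /= u_n dmap_cons_max // => /(_ erefl).
by move/inIN; rewrite opprK.
Qed.

End Cone.

Lemma exact_at_set0 n : exact_at set0 n.
Proof.
move=> f f_supp _; exists (fun _ => 0); split => // t t_n.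
rewrite (f_supp t t_n); last by case: t t_n => //= x w _; rewrite inE.
rewrite /dmap big1 ?subr0 ?oppr0 => [|t' _]; [exact: inI0 | exact: mul0r].
Qed.

Lemma exact_at_card n : (forall (A : {set 'I_N}) b, b \in A -> (forall x, x \in A -> (x <= b)%N) ->
  boundary_max_part A b n) -> forall X, exact_at X n.
Proof.
move=> bnd X; have [m] := ubnP #|X|; elim: m X => // m IHm X X_m.
have [->|[x0 Xx0]] := set_0Vmem X; first exact: exact_at_set0.
have [b Xb b_max] := arg_maxnP (fun i : 'I_N => nat_of_ord i) Xx0.
apply: (exact_at_cone Xb b_max); last exact: bnd.
by apply: IHm; move: X_m; rewrite (cardsD1 b X) [b \in X]Xb add1n ltnS.
Qed.

Lemma exact_at_all n X : exact_at X n.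
Proof.
elim: n X => [|n IHn]; apply: exact_at_card => A b Ab b_max.
  exact: boundary_max_part0.
exact: boundary_max_partS.
Qed.

Lemma dcoef_homog X t u : dcoef X t u \is 1.-homog.
Proof.
elim: t X u => [|c w IH] X u /=; first exact: rpred0.
apply: rpredB; first by case: ifP => _; [rewrite dhomogX; apply/eqP/mdeg1 | exact: rpred0].
by case: u => [|c' u']; [exact: rpred0 | case: ifP => _; [exact: IH | exact: rpred0]].
Qed.

Lemma inI_mcoeff0 p : inI p -> p@_0 = 0.
Proof.
move=> Ip; apply: (inIX_coef (inI_inIX set0 Ip)); rewrite /mono_inIX negb_or.
apply/andP; split; first by apply/existsP => -[x]; rewrite inE.
apply/existsP => -[a /existsP [b /andP [_ /mnm_lepP /(_ a)]]].
by rewrite !mnmDE !mnm1E eqxx mnm0E.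
Qed.

End MonomialResolution.

Lemma mxBE (V : zmodType) m p (A B : 'M[V]_(m, p)) i j : (A - B) i j = A i j - B i j.
Proof. by rewrite !mxE. Qed.

Section PreWDVV.
Variables (k : fieldType) (n : nat).
Local Notation NN := (nvars n).
Local Notation R := {mpoly k[NN]}.

Definition crossing : rel 'I_NN := fun i j => a_int (enum_val i) (enum_val j) == 4%N.

Lemma sum_crossing (c : 'I_NN -> 'I_NN -> R) :
  \sum_(s : P n) \sum_(t : P n | a_int s t == 4%N)
     c (enum_rank s) (enum_rank t) * (xvar k s * xvar k t) =
  \sum_i \sum_(j | crossing i j) c i j * ('X_i * 'X_j).
Proof.
have enum_bij : bijective (@enum_val _ (pred_of_simpl (pred_of_argType (P n)))).
  by exists enum_rank; [apply: enum_valK | apply: enum_rankK].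
rewrite (reindex _ (onW_bij _ enum_bij)); apply: eq_bigr => i _.
rewrite (reindex _ (onW_bij _ enum_bij)).
by apply: eq_big => [j|j _] //; rewrite /xvar !enum_valK.
Qed.

Lemma inJ_inI (p : R) : inJ p <-> inI crossing p.
Proof.
split => [[c ->]|[c ->]]; last first.
  by exists (fun s t => c (enum_rank s) (enum_rank t)); rewrite sum_crossing.
exists (fun i j => c (enum_val i) (enum_val j)); rewrite -sum_crossing.
by apply: eq_bigr => s _; apply: eq_bigr => t _; rewrite !enum_rankK.
Qed.

Local Notation admissibleT := (admissible crossing setT).
Local Notation dcoefT := (dcoef k crossing setT).
Local Notation dmapT := (dmap crossing setT).

Definition koszul_basis i : {pred i.-tuple 'I_NN} := [pred t : i.-tuple 'I_NN | admissibleT t].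
Arguments koszul_basis i : clear implicits.
Definition betti i : nat := #|koszul_basis i|.
Definition bseq i (r : 'I_(betti i)) : seq 'I_NN := tval (enum_val r).

Definition koszul_mx i : 'M[R]_(betti i.+1, betti i) :=
  \matrix_(r, c) dcoefT (bseq r) (bseq c).

Arguments koszul_mx i : clear implicits.

Lemma admissible_bseq i (r : 'I_(betti i)) : admissibleT (bseq r).
Proof. exact: (enum_valP r). Qed.

Lemma size_bseq i (r : 'I_(betti i)) : size (bseq r) = i.
Proof. exact: size_tuple. Qed.

Lemma bseq_inj i : injective (@bseq i).
Proof. by move=> r1 r2 /val_inj /enum_val_inj. Qed.

Lemma bseq_surj i u : size u = i -> admissibleT u -> exists r : 'I_(betti i), bseq r = u.
Proof.
move=> /eqP u_i Tu; have u_basis : Tuple u_i \in koszul_basis i by [].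
by exists (enum_rank_in u_basis (Tuple u_i)); rewrite /bseq enum_rankK_in.
Qed.

Lemma betti0 : betti 0 = 1%N.
Proof.
rewrite /betti (eq_card (B := predT)) ?card_tuple ?expn0 // => t.
by rewrite tuple0.
Qed.

Lemma sum_basis i (F : seq 'I_NN -> R) :
  (forall t : i.-tuple 'I_NN, ~~ admissibleT t -> F t = 0) ->
  \sum_(t : i.-tuple 'I_NN) F t = \sum_(r : 'I_(betti i)) F (bseq r).
Proof.
move=> F0; rewrite (bigID (mem (koszul_basis i))) /= [X in _ + X]big1 ?addr0 //.
by rewrite big_enum_val.
Qed.

(* Rows of length betti i are the chains of F_i supported on admissible sequences. *)
Definition chain_of_row i (v : 'rV[R]_(betti i)) (s : seq 'I_NN) : R :=
  \sum_(r : 'I_(betti i)) (if bseq r == s then v 0 r else 0).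

Definition row_of_chain i (g : seq 'I_NN -> R) : 'rV[R]_(betti i) := \row_r g (bseq r).

Arguments row_of_chain i g : clear implicits.

Lemma chain_of_row_bseq i (v : 'rV[R]_(betti i)) r : chain_of_row v (bseq r) = v 0 r.
Proof.
rewrite /chain_of_row (bigD1 r) //= eqxx big1 ?addr0 // => r' r'r.
by case: eqP => // /bseq_inj r'_r; rewrite r'_r eqxx in r'r.
Qed.

Lemma supported_chain_of_row i (v : 'rV[R]_(betti i)) :
  supported crossing setT i (chain_of_row v).
Proof.
move=> t _ Tt; apply: big1 => r _; case: eqP => // rt.
by rewrite -rt admissible_bseq in Tt.
Qed.

Lemma dmap_bseq i (g : seq 'I_NN -> R) u : supported crossing setT i.+1 g ->
  dmapT i g u = \sum_(r : 'I_(betti i.+1)) g (bseq r) * dcoefT (bseq r) u.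
Proof.
move=> g_supp; rewrite /dmap (@sum_basis i.+1 (fun t => g t * dcoefT t u)) // => t Tt.
by rewrite (g_supp t (size_tuple t) Tt) mul0r.
Qed.

Lemma mulmx_koszul_mx i (v : 'rV[R]_(betti i.+1)) c :
  (v *m koszul_mx i) 0 c = dmapT i (chain_of_row v) (bseq c).
Proof.
rewrite (dmap_bseq _ (supported_chain_of_row v)) !mxE; apply: eq_bigr => r _.
by rewrite chain_of_row_bseq mxE.
Qed.

Lemma row_of_chain_mulmx i (g : seq 'I_NN -> R) c : supported crossing setT i.+1 g ->
  (row_of_chain i.+1 g *m koszul_mx i) 0 c = dmapT i g (bseq c).
Proof.
move=> g_supp; rewrite (dmap_bseq _ g_supp) !mxE; apply: eq_bigr => r _.
by rewrite !mxE.
Qed.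

Lemma koszul_mx_homog i r c : koszul_mx i r c \is 1.-homog.
Proof. by rewrite mxE; apply: dcoef_homog. Qed.

Lemma koszul_mx_square i r c : inI crossing ((koszul_mx i.+1 *m koszul_mx i) r c).
Proof.
rewrite !mxE (eq_bigr (fun s => dcoefT (bseq r) (bseq s) * dcoefT (bseq s) (bseq c)));
  last by move=> s _; rewrite !mxE.
rewrite -(@sum_basis i.+1 (fun s => dcoefT (bseq r) s * dcoefT s (bseq c))).
  by apply: dcoef_square; [exact: size_bseq | exact: size_bseq | exact: admissible_bseq].
move=> t Tt; have [->|/(dcoef_admissible (admissible_bseq r)) Tt'] := eqVneq (dcoefT (bseq r) t) 0.
  by rewrite mul0r.
by rewrite Tt' in Tt.
Qed.

Lemma koszul_augmentation (v : 'rV[R]_(betti 0)) :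
  (forall j, (v 0 j)@_0 = 0) <-> exists w : 'rV_(betti 1), inJrow (v - w *m koszul_mx 0).
Proof.
have v_const j : v 0 j = chain_of_row v [::].
  by rewrite -chain_of_row_bseq (size0nil (size_bseq j)).
split => [v0 | [w Iw] j].
  have [q Iq] : inIX crossing setT (chain_of_row v [::]).
    apply: coef_inIX => m m_out; have -> : m = 0%MM.
      apply/mnmP => i; rewrite mnm0E; apply/eqP; rewrite -leqn0 leqNgt; apply/negP => m_i.
      by move: m_out; rewrite /mono_inIX negb_or => /andP [/existsPn /(_ i)]; rewrite inE m_i.
    by rewrite -(v_const (cast_ord (esym betti0) ord0)) v0.
  pose g s := if s is [:: x] then q x else 0.
  have g_supp : supported crossing setT 1 g by move=> [|x [|y s]] //= _; rewrite inE.
  exists (row_of_chain 1 g) => j; rewrite mxBE row_of_chain_mulmx //.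
  rewrite (size0nil (size_bseq j)) dmap0 v_const; apply/inJ_inI; move: Iq.
  by congr (inI _ (_ - _)); apply: eq_big => // x; rewrite inE.
have -> : v 0 j = (v - w *m koszul_mx 0) 0 j + (w *m koszul_mx 0) 0 j.
  by rewrite mxBE subrK.
rewrite mcoeffD (inI_mcoeff0 (iffLR (inJ_inI _) (Iw j))) add0r.
rewrite mulmx_koszul_mx (size0nil (size_bseq j)) dmap0 raddf_sum big1 // => x _.
by apply: mcoeffMX_eq0; apply/negP => /mnm_lepP /(_ x); rewrite mnm1E eqxx mnm0E.
Qed.

Lemma koszul_exact i (v : 'rV[R]_(betti i.+1)) : inJrow (v *m koszul_mx i) <->
  exists w : 'rV_(betti i.+2), inJrow (v - w *m koszul_mx i.+1).
Proof.
split => [Iv | [w Iw] c].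
  have cycle u : size u = i -> inI crossing (dmapT i (chain_of_row v) u).
    move=> u_i; have [Tu|Tu] := boolP (admissibleT u).
      by have [c <-] := bseq_surj u_i Tu; rewrite -mulmx_koszul_mx; apply/inJ_inI.
    by rewrite (dmap_supported (supported_chain_of_row v) Tu); apply: inI0.
  have [g [g_supp Ig]] := exact_at_all (supported_chain_of_row v) cycle.
  exists (row_of_chain i.+2 g) => c; rewrite mxBE row_of_chain_mulmx //.
  by rewrite -(chain_of_row_bseq v); apply/inJ_inI/Ig/size_bseq.
rewrite -[v](subrK (w *m koszul_mx i.+1)) mulmxDl -mulmxA mxE; apply/inJ_inI/inID.
  rewrite mulmx_koszul_mx; apply: dmap_inI => t _; apply: inI_sum => r _.
  by case: ifP => _; [apply/inJ_inI/Iw | apply: inI0].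
by rewrite mxE; apply: inI_sum => r _; apply/inIMl/koszul_mx_square.
Qed.

End PreWDVV.

(* Every quadratic monomial algebra is Koszul (Froberg). *)
Theorem mainTheorem15 (k : fieldType) (n : nat) :
  (3 <= n)%N -> [pchar k]%R =i pred0 -> preWDVV_Koszul k n.
Proof.
move=> _ _; exists (betti n), (koszul_mx k n); split.
- exact: betti0.
- exact: koszul_mx_homog.
- exact: koszul_augmentation.
- exact: koszul_exact.
Qed.
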